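(* Let $X$ be a Banach space with $\dim X>1$, $x\in X$ and $T\in L(X)$. If there is a non-zero $f\in X^*$ such that $f(T^nx)=o(\|T^nx\|)$ as $n\to\infty$, then $x$ is not a supercyclic vector for $T$.
   Context: $x$ is a supercyclic vector for $T$ if $\{zT^nx:z\in\mathbb{K},n\in\mathbb{Z}_+\}$ is norm dense in $X$, where $\mathbb{K}\in\{\mathbb{R},\mathbb{C}\}$ is the scalar field. *)

From Stdlib Require Import Reals.
Open Scope R_scope.

Record Cx : Type := mkC { Re : R ; Im : R }.
Definition Cadd (z w : Cx) : Cx := mkC (Re z + Re w) (Im z + Im w).
Definition Cmul (z w : Cx) : Cx :=
  mkC (Re z * Re w - Im z * Im w) (Re z * Im w + Im z * Re w).
Definition Cabs (z : Cx) : R := sqrt (Re z * Re z + Im z * Im z).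

Definition K (b : bool) : Type := if b then Cx else R.

Definition Kadd (b : bool) : K b -> K b -> K b :=
  match b with true => Cadd | false => Rplus end.
Definition Kmul (b : bool) : K b -> K b -> K b :=
  match b with true => Cmul | false => Rmult end.
Definition K0 (b : bool) : K b :=
  match b with true => mkC 0 0 | false => 0 end.
Definition K1 (b : bool) : K b :=
  match b with true => mkC 1 0 | false => 1 end.
Definition Kabs (b : bool) : K b -> R :=
  match b with true => Cabs | false => Rabs end.

Record NormedSpace (b : bool) : Type := {
  car :> Type;
  vzero : car;
  vadd : car -> car -> car;
  vopp : car -> car;
  vscal : K b -> car -> car;
  norm : car -> R;
  vadd_assoc : forall u v w, vadd u (vadd v w) = vadd (vadd u v) w;
  vadd_comm : forall u v, vadd u v = vadd v u;
  vadd_zero : forall u, vadd u vzero = u;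
  vadd_opp : forall u, vadd u (vopp u) = vzero;
  vscal_one : forall u, vscal (K1 b) u = u;
  vscal_mul : forall a c u, vscal a (vscal c u) = vscal (Kmul b a c) u;
  vscal_addv : forall a u v, vscal a (vadd u v) = vadd (vscal a u) (vscal a v);
  vscal_adds : forall a c u, vscal (Kadd b a c) u = vadd (vscal a u) (vscal c u);
  norm_eq0 : forall u, norm u = 0 -> u = vzero;
  norm_triangle : forall u v, norm (vadd u v) <= norm u + norm v;
  norm_scal : forall a u, norm (vscal a u) = Kabs b a * norm u
}.

Arguments vzero {b} _.
Arguments vadd {b} {_} _ _.
Arguments vopp {b} {_} _.
Arguments vscal {b} {_} _ _.
Arguments norm {b} {_} _.

Definition vsub {b} {X : NormedSpace b} (u v : X) : X := vadd u (vopp v).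

Definition complete {b} (X : NormedSpace b) : Prop :=
  forall u : nat -> X,
    (forall eps, eps > 0 -> exists N, forall m n, (m >= N)%nat -> (n >= N)%nat ->
        norm (vsub (u m) (u n)) < eps) ->
    exists l : X, forall eps, eps > 0 -> exists N, forall n, (n >= N)%nat ->
        norm (vsub (u n) l) < eps.

Definition dim_gt1 {b} (X : NormedSpace b) : Prop :=
  exists u v : X, forall a c : K b,
    vadd (vscal a u) (vscal c v) = vzero X -> a = K0 b /\ c = K0 b.

Definition bounded_operator {b} {X : NormedSpace b} (T : X -> X) : Prop :=
  (forall u v, T (vadd u v) = vadd (T u) (T v)) /\
  (forall a u, T (vscal a u) = vscal a (T u)) /\
  (exists M, forall u, norm (T u) <= M * norm u).

Definition bounded_functional {b} {X : NormedSpace b} (f : X -> K b) : Prop :=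
  (forall u v, f (vadd u v) = Kadd b (f u) (f v)) /\
  (forall a u, f (vscal a u) = Kmul b a (f u)) /\
  (exists M, forall u, Kabs b (f u) <= M * norm u).

Definition orbit {b} {X : NormedSpace b} (T : X -> X) (n : nat) (x : X) : X :=
  Nat.iter n T x.

Definition supercyclic {b} {X : NormedSpace b} (T : X -> X) (x : X) : Prop :=
  forall (y : X) (eps : R), eps > 0 ->
    exists (z : K b) (n : nat), norm (vsub (vscal z (orbit T n x)) y) < eps.

From Stdlib Require Import Reals Arith Lra Lia Psatz List Classical IndefiniteDescription.
From Coquelicot Require Complex.
Open Scope R_scope.

(* Suppose x were supercyclic.  Since dim X > 1 there is a
   vector w <> 0 with f w = 0; fix y0 with f y0 <> 0 and consider the
   N+1 equally spaced points  p_k = y0 + (k/(N+1)) w,  k = 0..N,  all of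
   which satisfy f p_k = f y0.  Choose N so large that
   |f(T^n x)| <= eps ||T^n x|| for n >= N.
   - Tail: a multiple of T^n x with n >= N cannot approximate p_k, since
     f is small on the ray K T^n x while f p_k = f y0 is not
     ([tail_estimate]).
   - Separation: one line K v cannot approximate two distinct points of
     the segment, because the bounded operator u |-> f(p) u - f(u) p kills
     p but not the direction w ([separation]).
   So the N+1 points would need N+1 distinct exponents n < N, which the
   pigeonhole principle forbids ([segment_not_covered]). *)

Definition Kopp (b : bool) : K b -> K b :=
  match b return K b -> K b with
  | true => fun z => mkC (- Re z) (- Im z)
  | false => Ropp
  end.

Definition Kr (b : bool) : R -> K b :=
  match b return R -> K b with
  | true => fun r => mkC r 0
  | false => fun r => r
  end.

(* Our complex numbers, seen as Coquelicot complex numbers: this lets us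
   reuse Coquelicot's theory of the modulus. *)
Definition toC (z : Cx) : Complex.C := (Re z, Im z).

Lemma Cabs_Cmod (z : Cx) : Cabs z = Complex.Cmod (toC z).
Proof. unfold Cabs, Complex.Cmod; simpl; f_equal; ring. Qed.

Lemma Kadd_opp b (a : K b) : Kadd b a (Kopp b a) = K0 b.
Proof. destruct b; simpl in *; [unfold Cadd; f_equal; simpl; ring | ring]. Qed.

Lemma Kadd_0 b (a : K b) : Kadd b a (K0 b) = a.
Proof. destruct b; simpl in *; [destruct a; unfold Cadd; simpl; f_equal; ring | ring]. Qed.

Lemma Kmul_comm b (a c : K b) : Kmul b a c = Kmul b c a.
Proof. destruct b; simpl in *; [unfold Cmul; f_equal; simpl; ring | ring]. Qed.

Lemma Kmul_0 b (a : K b) : Kmul b a (K0 b) = K0 b.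
Proof. destruct b; simpl in *; [unfold Cmul; f_equal; simpl; ring | ring]. Qed.

Lemma Kmul_opp1 b (a : K b) : Kmul b (Kopp b (K1 b)) a = Kopp b a.
Proof. destruct b; simpl in *; [destruct a; unfold Cmul; simpl; f_equal; ring | ring]. Qed.

Lemma Kadd_Kr b r s : Kadd b (Kr b r) (Kr b s) = Kr b (r + s).
Proof. destruct b; simpl; [unfold Cadd; f_equal; simpl; ring | ring]. Qed.

Lemma K1_neq_K0 b : K1 b <> K0 b.
Proof. destruct b; simpl; [intros H; injection H; lra | lra]. Qed.

Lemma Kopp_eq0 b (a : K b) : Kopp b a = K0 b -> a = K0 b.
Proof. destruct b; simpl; [destruct a; intros H; injection H; intros; f_equal; lra | lra]. Qed.

Lemma Kabs_K0 b : Kabs b (K0 b) = 0.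
Proof. destruct b; simpl; [rewrite Cabs_Cmod; apply Complex.Cmod_0 | apply Rabs_R0]. Qed.

Lemma Kabs_Kr b r : Kabs b (Kr b r) = Rabs r.
Proof. destruct b; simpl; [rewrite Cabs_Cmod; apply Complex.Cmod_R | reflexivity]. Qed.

Lemma Kabs_opp b (a : K b) : Kabs b (Kopp b a) = Kabs b a.
Proof.
  destruct b; simpl; [rewrite !Cabs_Cmod; apply (Complex.Cmod_opp (toC a)) | apply Rabs_Ropp].
Qed.

Lemma Kabs_opp1 b : Kabs b (Kopp b (K1 b)) = 1.
Proof.
  rewrite Kabs_opp. destruct b; simpl; [rewrite Cabs_Cmod; apply Complex.Cmod_1 | apply Rabs_R1].
Qed.

Lemma Kabs_nonneg b (a : K b) : 0 <= Kabs b a.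
Proof. destruct b; simpl; [apply sqrt_pos | apply Rabs_pos]. Qed.

Lemma Kabs_pos b (a : K b) : a <> K0 b -> 0 < Kabs b a.
Proof.
  intros Ha. destruct (Kabs_nonneg b a) as [|H0]; [assumption|]. exfalso; apply Ha.
  destruct b; simpl in *.
  - rewrite Cabs_Cmod in H0. pose proof (Complex.Cmod_eq_0 (toC a) (eq_sym H0)) as Hz.
    destruct a; unfold toC in Hz; simpl in Hz. now injection Hz as -> ->.
  - apply NNPP; intros Hne. now apply (Rabs_no_R0 a Hne).
Qed.

Lemma Kabs_mul b (a c : K b) : Kabs b (Kmul b a c) = Kabs b a * Kabs b c.
Proof.
  destruct b; simpl; [rewrite !Cabs_Cmod; apply (Complex.Cmod_mult (toC a) (toC c)) | apply Rabs_mult].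
Qed.

Lemma Kabs_triangle b (a c : K b) : Kabs b (Kadd b a c) <= Kabs b a + Kabs b c.
Proof.
  destruct b; simpl;
    [rewrite !Cabs_Cmod; apply (Complex.Cmod_triangle (toC a) (toC c)) | apply Rabs_triang].
Qed.

Arguments vadd_assoc {b _}. Arguments vadd_comm {b _}. Arguments vadd_zero {b _}.
Arguments vadd_opp {b _}. Arguments vscal_one {b _}. Arguments vscal_mul {b _}.
Arguments vscal_addv {b _}. Arguments vscal_adds {b _}. Arguments norm_eq0 {b _}.
Arguments norm_triangle {b _}. Arguments norm_scal {b _}.

Section VectorAlgebra.
Variable b : bool.
Variable X : NormedSpace b.
Implicit Types u v w : X.

Lemma vadd_0l u : vadd (vzero X) u = u.
Proof. rewrite vadd_comm. apply vadd_zero. Qed.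

Lemma vadd_cancel u v w : vadd u v = vadd u w -> v = w.
Proof.
  intros H. rewrite <- (vadd_0l v), <- (vadd_0l w), <- (vadd_opp u), (vadd_comm u).
  rewrite <- !vadd_assoc, H. reflexivity.
Qed.

Lemma opp_unique u v : vadd u v = vzero X -> v = vopp u.
Proof. intros H. apply (vadd_cancel u). now rewrite H, vadd_opp. Qed.

Lemma vscal_0v u : vscal (K0 b) u = vzero X.
Proof.
  apply (vadd_cancel (vscal (K0 b) u)). rewrite vadd_zero, <- vscal_adds. now rewrite Kadd_0.
Qed.

Lemma vscal_a0 (a : K b) : vscal a (vzero X) = vzero X.
Proof.
  apply (vadd_cancel (vscal a (vzero X))). rewrite vadd_zero, <- vscal_addv. now rewrite vadd_zero.
Qed.

Lemma vscal_opp (a : K b) u : vscal a (vopp u) = vopp (vscal a u).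
Proof. apply opp_unique. rewrite <- vscal_addv, vadd_opp. apply vscal_a0. Qed.

Lemma vopp_scal u : vopp u = vscal (Kopp b (K1 b)) u.
Proof.
  symmetry. apply opp_unique. rewrite <- (vscal_one u) at 1.
  rewrite <- vscal_adds, Kadd_opp. apply vscal_0v.
Qed.

Lemma vopp_add u v : vopp (vadd u v) = vadd (vopp u) (vopp v).
Proof. rewrite !vopp_scal. apply vscal_addv. Qed.

Lemma vsub_0 u : vsub u (vzero X) = u.
Proof. unfold vsub. rewrite vopp_scal, vscal_a0. apply vadd_zero. Qed.

Lemma vsub_add u v : vadd (vsub u v) v = u.
Proof. unfold vsub. rewrite <- vadd_assoc, (vadd_comm (vopp v)), vadd_opp. apply vadd_zero. Qed.

Lemma vsub_sub u v : vsub u (vsub u v) = v.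
Proof.
  unfold vsub. rewrite vopp_add, vadd_assoc, vadd_opp, vadd_0l.
  symmetry. apply opp_unique. rewrite vadd_comm. apply vadd_opp.
Qed.

Lemma norm_0 : norm (vzero X) = 0.
Proof. rewrite <- (vscal_0v (vzero X)), norm_scal, Kabs_K0. ring. Qed.

Lemma norm_opp u : norm (vopp u) = norm u.
Proof. rewrite vopp_scal, norm_scal, Kabs_opp1. ring. Qed.

Lemma norm_nonneg u : 0 <= norm u.
Proof. pose proof (norm_triangle u (vopp u)). rewrite vadd_opp, norm_0, norm_opp in H. lra. Qed.

Lemma norm_pos u : u <> vzero X -> 0 < norm u.
Proof. intros H. destruct (norm_nonneg u); auto. exfalso. apply H, norm_eq0; auto. Qed.

Lemma norm_vsub_le u v : norm (vsub u v) <= norm u + norm v.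
Proof. unfold vsub. rewrite <- (norm_opp v). apply norm_triangle. Qed.

Lemma norm_le_l u v : norm u <= norm v + norm (vsub u v).
Proof. rewrite <- (vsub_add u v) at 1. rewrite Rplus_comm. apply norm_triangle. Qed.

Lemma norm_le_r u v : norm v <= norm u + norm (vsub u v).
Proof. rewrite <- (vsub_sub u v) at 1. apply norm_vsub_le. Qed.

End VectorAlgebra.

Arguments vadd_0l {b X}. Arguments vscal_0v {b X}. Arguments vscal_a0 {b X}.
Arguments vscal_opp {b X}. Arguments vopp_scal {b X}. Arguments vopp_add {b X}.
Arguments vsub_0 {b X}. Arguments vsub_add {b X}. Arguments vsub_sub {b X}.
Arguments norm_opp {b X}. Arguments norm_nonneg {b X}. Arguments norm_pos {b X}.
Arguments norm_vsub_le {b X}. Arguments norm_le_l {b X}. Arguments norm_le_r {b X}.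

Section Functionals.
Variable b : bool.
Variable X : NormedSpace b.
Variable f : X -> K b.
Hypothesis Hf : bounded_functional f.

Lemma functional_opp u : f (vopp u) = Kopp b (f u).
Proof. destruct Hf as [_ [Fs _]]. rewrite vopp_scal, Fs. apply Kmul_opp1. Qed.

Lemma functional_bound_pos : exists M, 0 < M /\ forall u, Kabs b (f u) <= M * norm u.
Proof.
  destruct Hf as [_ [_ [M0 HM0]]]. exists (Rabs M0 + 1). split.
  - pose proof (Rabs_pos M0). lra.
  - intros u. eapply Rle_trans; [apply HM0|].
    pose proof (norm_nonneg u). pose proof (Rle_abs M0). nra.
Qed.

Lemma functional_lipschitz M : (forall u, Kabs b (f u) <= M * norm u) ->
  forall u v, Kabs b (f u) <= Kabs b (f v) + M * norm (vsub u v)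
           /\ Kabs b (f v) <= Kabs b (f u) + M * norm (vsub u v).
Proof.
  destruct Hf as [Fa _]. intros HM u v. split.
  - rewrite <- (vsub_add u v) at 1. rewrite Fa.
    eapply Rle_trans; [apply Kabs_triangle|]. pose proof (HM (vsub u v)). lra.
  - rewrite <- (vsub_sub u v) at 1. unfold vsub at 1. rewrite Fa, functional_opp.
    eapply Rle_trans; [apply Kabs_triangle|]. rewrite Kabs_opp. pose proof (HM (vsub u v)). lra.
Qed.

(* In dimension > 1 the kernel of f is non-trivial: from independent u, v
   the combination f(v) u - f(u) v is a non-zero vector of ker f. *)
Lemma kernel_nontrivial : dim_gt1 X -> exists w : X, w <> vzero X /\ f w = K0 b.
Proof.
  destruct Hf as [Fa [Fs _]]. intros [u [v Hind]].
  destruct (classic (f u = K0 b)) as [Hu|Hu].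
  - exists u. split; auto. intros ->. apply (K1_neq_K0 b).
    apply (Hind (K1 b) (K0 b)). rewrite vscal_a0, vscal_0v. apply vadd_zero.
  - exists (vadd (vscal (f v) u) (vscal (Kopp b (f u)) v)). split.
    + intros H. apply Hind in H. destruct H as [_ H]. apply Hu, Kopp_eq0, H.
    + rewrite Fa, !Fs. destruct b; simpl in *;
        [destruct (f u), (f v); unfold Cadd, Cmul; simpl; f_equal; ring | ring].
Qed.

End Functionals.

Arguments functional_opp {b X f}. Arguments functional_lipschitz {b X f}.

(** * The two estimates *)

Section Estimates.
Variable b : bool.
Variable X : NormedSpace b.
Variable f : X -> K b.
Hypothesis Hf : bounded_functional f.
Variable M : R.
Hypothesis HM0 : 0 <= M.
Hypothesis HM : forall u, Kabs b (f u) <= M * norm u.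

Lemma tail_estimate (eps delta : R) (u p : X) (a : K b) :
  0 <= eps -> delta <= 1 -> Kabs b (f u) <= eps * norm u ->
  norm (vsub (vscal a u) p) < delta ->
  Kabs b (f p) <= eps * (norm p + 1) + M * delta.
Proof.
  intros Heps Hd Hu Hap. destruct Hf as [_ [Fs _]].
  destruct (functional_lipschitz Hf M HM (vscal a u) p) as [_ Hfp].
  rewrite Fs, Kabs_mul in Hfp.
  pose proof (norm_le_l (vscal a u) p) as Hn. rewrite norm_scal in Hn.
  pose proof (Kabs_nonneg b a). pose proof (norm_nonneg (vsub (vscal a u) p)).
  assert (Kabs b a * Kabs b (f u) <= eps * (Kabs b a * norm u)) by nra.
  assert (eps * (Kabs b a * norm u) <= eps * (norm p + 1)) by (apply Rmult_le_compat_l; lra).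
  assert (M * norm (vsub (vscal a u) p) <= M * delta) by (apply Rmult_le_compat_l; lra).
  lra.
Qed.

(* The operator  u |-> f(p) u - f(u) p : linear, bounded, it kills p and
   acts as multiplication by f(p) on ker f. *)
Definition kill (p v : X) : X := vsub (vscal (f p) v) (vscal (f v) p).

Lemma kill_add p u v : kill p (vadd u v) = vadd (kill p u) (kill p v).
Proof.
  destruct Hf as [Fa _]. unfold kill, vsub.
  rewrite Fa, vscal_addv, vscal_adds, vopp_add, <- !vadd_assoc. f_equal.
  rewrite !vadd_assoc. f_equal. apply vadd_comm.
Qed.

Lemma kill_scal p a u : kill p (vscal a u) = vscal a (kill p u).
Proof.
  destruct Hf as [_ [Fs _]]. unfold kill, vsub.
  rewrite Fs, vscal_addv, vscal_opp, !vscal_mul, (Kmul_comm b (f p) a). reflexivity.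
Qed.

Lemma kill_sub p u v : kill p (vsub u v) = vsub (kill p u) (kill p v).
Proof. unfold vsub. rewrite kill_add, vopp_scal, kill_scal, <- vopp_scal. reflexivity. Qed.

Lemma kill_self p : kill p p = vzero X.
Proof. unfold kill, vsub. apply vadd_opp. Qed.

Lemma kill_kernel p w : f w = K0 b -> kill p w = vscal (f p) w.
Proof. intros H. unfold kill. rewrite H, vscal_0v. apply vsub_0. Qed.

Lemma kill_bound p v : norm (kill p v) <= (Kabs b (f p) + M * norm p) * norm v.
Proof.
  unfold kill. eapply Rle_trans; [apply norm_vsub_le|].
  rewrite !norm_scal. pose proof (HM v). pose proof (norm_nonneg p). nra.
Qed.

Lemma scalar_comparison (p q v : X) (a c : K b) (delta : R) :
  f q = f p -> 0 < Kabs b (f p) ->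
  norm (vsub (vscal a v) p) < delta -> norm (vsub (vscal c v) q) < delta ->
  M * delta <= Kabs b (f p) / 2 -> Kabs b c <= 3 * Kabs b a.
Proof.
  intros fq HA Hap Hcq Hd. destruct Hf as [_ [Fs _]].
  assert (Sa : Kabs b (f p) <= Kabs b a * Kabs b (f v) + M * delta).
  { destruct (functional_lipschitz Hf M HM (vscal a v) p) as [_ H].
    rewrite Fs, Kabs_mul in H.
    pose proof (Rmult_le_compat_l _ _ _ HM0 (Rlt_le _ _ Hap)). lra. }
  assert (Sc : Kabs b c * Kabs b (f v) <= Kabs b (f p) + M * delta).
  { destruct (functional_lipschitz Hf M HM (vscal c v) q) as [H _].
    rewrite Fs, Kabs_mul, fq in H.
    pose proof (Rmult_le_compat_l _ _ _ HM0 (Rlt_le _ _ Hcq)). lra. }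
  pose proof (Kabs_nonneg b a). pose proof (Kabs_nonneg b c).
  destruct (Kabs_nonneg b (f v)) as [Hfv|Hfv]; [|rewrite <- Hfv in Sa; nra].
  apply (Rmult_le_reg_r (Kabs b (f v))); nra.
Qed.

(* Separation: if two multiples a v, c v of one vector approximate p and
   q = p + s w (w in ker f) within delta, then s is O(delta).  Indeed
   kill p sends a v ~ p to a (kill p v) ~ 0 and c v ~ q to
   c (kill p v) ~ s f(p) w, while |c| <= 3 |a| by [scalar_comparison]. *)
Lemma separation (p q w v : X) (a c : K b) (s delta : R) :
  f w = K0 b -> q = vadd p (vscal (Kr b s) w) -> 0 < Kabs b (f p) ->
  norm (vsub (vscal a v) p) < delta -> norm (vsub (vscal c v) q) < delta ->
  M * delta <= Kabs b (f p) / 2 ->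
  Rabs s * Kabs b (f p) * norm w <= 4 * (Kabs b (f p) + M * norm p) * delta.
Proof.
  intros Hw Hq HA Hap Hcq Hd. pose proof Hf as [Fa [Fs _]].
  set (A := Kabs b (f p)) in *. set (L := A + M * norm p).
  assert (HL : 0 <= L).
  { pose proof (norm_nonneg p). pose proof (HM p). unfold L, A in *. lra. }
  assert (Kp : forall u, norm u < delta -> norm (kill p u) <= L * delta).
  { intros u Hu. eapply Rle_trans; [apply kill_bound|]. pose proof (norm_nonneg u).
    apply Rmult_le_compat_l; lra. }
  assert (Ka : kill p (vsub (vscal a v) p) = vscal a (kill p v)).
  { now rewrite kill_sub, kill_scal, kill_self, vsub_0. }
  assert (Kc : kill p (vsub (vscal c v) q)
               = vsub (vscal c (kill p v)) (vscal (Kr b s) (vscal (f p) w))).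
  { now rewrite kill_sub, kill_scal, Hq, kill_add, kill_self, vadd_0l, kill_scal, (kill_kernel p w Hw). }
  assert (Na : Kabs b a * norm (kill p v) <= L * delta).
  { rewrite <- norm_scal, <- Ka. now apply Kp. }
  assert (Nc : Rabs s * A * norm w <= Kabs b c * norm (kill p v) + L * delta).
  { pose proof (norm_le_r (vscal c (kill p v)) (vscal (Kr b s) (vscal (f p) w))) as H.
    rewrite <- Kc, !norm_scal, Kabs_Kr in H. pose proof (Kp _ Hcq). unfold A. nra. }
  assert (fq : f q = f p) by (rewrite Hq, Fa, Fs, Hw, Kmul_0, Kadd_0; reflexivity).
  pose proof (scalar_comparison p q v a c delta fq HA Hap Hcq Hd) as Cac.
  pose proof (Kabs_nonneg b a). pose proof (norm_nonneg (kill p v)). nra.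
Qed.

End Estimates.

Lemma pigeonhole (N : nat) (g : nat -> nat) : (forall k, (k <= N)%nat -> (g k < N)%nat) ->
  exists j k, (j < k <= N)%nat /\ g j = g k.
Proof.
  intros Hg. apply NNPP. intros Hc.
  assert (Hnd : NoDup (map g (seq 0 (S N)))).
  { apply NoDup_map_NoDup_ForallPairs; [|apply seq_NoDup].
    intros x y Hx Hy Hxy. apply in_seq in Hx, Hy.
    destruct (Nat.lt_trichotomy x y) as [H|[H|H]]; auto; exfalso; apply Hc.
    - exists x, y. split; [lia|auto].
    - exists y, x. split; [lia|auto]. }
  apply NoDup_incl_length with (l' := seq 0 N) in Hnd.
  - rewrite length_map, !length_seq in Hnd. lia.
  - intros z Hz. apply in_map_iff in Hz. destruct Hz as [k [<- Hk]].
    apply in_seq in Hk. apply in_seq. specialize (Hg k). lia.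
Qed.

(** * Equally spaced points on a segment of a level set of f *)

Lemma grid_in_unit (N k : nat) : (k <= N)%nat -> 0 <= INR k * / (INR N + 1) <= 1.
Proof.
  intros Hk. apply le_INR in Hk. pose proof (pos_INR k).
  assert (Hpos : 0 < INR N + 1) by lra. split.
  - apply Rmult_le_pos; [lra | now apply Rlt_le, Rinv_0_lt_compat].
  - apply (Rmult_le_reg_r (INR N + 1)); [lra|].
    rewrite Rmult_assoc, Rinv_l; lra.
Qed.

Section Segment.
Variable b : bool.
Variable X : NormedSpace b.
Variable f : X -> K b.
Hypothesis Hf : bounded_functional f.
Variable M : R.
Hypothesis HM0 : 0 <= M.
Hypothesis HM : forall u, Kabs b (f u) <= M * norm u.
Variables y0 w : X.
Hypothesis Hw : f w = K0 b.

Definition segment (h : R) (k : nat) : X := vadd y0 (vscal (Kr b (INR k * h)) w).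

Lemma f_segment h k : f (segment h k) = f y0.
Proof. destruct Hf as [Fa [Fs _]]. unfold segment. now rewrite Fa, Fs, Hw, Kmul_0, Kadd_0. Qed.

Lemma segment_shift h j k :
  segment h k = vadd (segment h j) (vscal (Kr b (INR k * h - INR j * h)) w).
Proof.
  unfold segment. rewrite <- vadd_assoc, <- vscal_adds, Kadd_Kr.
  do 3 f_equal. ring.
Qed.

Lemma norm_segment h k : 0 <= INR k * h <= 1 -> norm (segment h k) <= norm y0 + norm w.
Proof.
  intros Hk. unfold segment. eapply Rle_trans; [apply norm_triangle|].
  rewrite norm_scal, Kabs_Kr, Rabs_pos_eq by lra. pose proof (norm_nonneg w). nra.
Qed.

Lemma segment_not_covered (N : nat) (v : nat -> X) (delta : R) :
  0 < Kabs b (f y0) -> 0 < norm w ->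
  M * delta <= Kabs b (f y0) / 2 ->
  8 * (Kabs b (f y0) + M * (norm y0 + norm w)) * delta
    <= / (INR N + 1) * Kabs b (f y0) * norm w ->
  ~ (forall k, (k <= N)%nat -> exists n a, (n < N)%nat /\
       norm (vsub (vscal a (v n)) (segment (/ (INR N + 1)) k)) < delta).
Proof.
  intros HA HW Hd1 Hd2 Hcov. set (h := / (INR N + 1)) in *.
  assert (Hh : 0 < h) by (apply Rinv_0_lt_compat; pose proof (pos_INR N); lra).
  destruct (functional_choice (fun k (na : nat * K b) => (k <= N)%nat ->
      (fst na < N)%nat /\ norm (vsub (vscal (snd na) (v (fst na))) (segment h k)) < delta))
    as [choice Hchoice].
  { intros k. destruct (le_lt_dec k N) as [Hk|Hk].
    - destruct (Hcov k Hk) as [n [a Hna]]. now exists (n, a).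
    - exists (O, K0 b). lia. }
  destruct (pigeonhole N (fun k => fst (choice k))) as [j [k [Hjk Hsame]]].
  { intros k Hk. apply (Hchoice k Hk). }
  destruct (Hchoice j ltac:(lia)) as [_ Hj]. destruct (Hchoice k ltac:(lia)) as [_ Hk].
  simpl in Hsame. rewrite <- Hsame in Hk.
  pose proof (separation b X f Hf M HM0 HM _ _ w _ _ _ _ delta Hw (segment_shift h j k)
    ltac:(now rewrite f_segment) Hj Hk ltac:(now rewrite f_segment)) as Hsep.
  rewrite f_segment in Hsep.
  assert (Hs : h <= Rabs (INR k * h - INR j * h)).
  { assert (1 <= INR k - INR j).
    { rewrite <- minus_INR by lia. apply (le_INR 1). lia. }
    rewrite Rabs_pos_eq by nra. nra. }
  pose proof (norm_segment h j (grid_in_unit N j ltac:(lia))).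
  assert (Hdelta : 0 <= delta) by (pose proof (norm_nonneg (vsub (vscal (snd (choice j))
    (v (fst (choice j)))) (segment h j))); lra).
  assert (4 * (Kabs b (f y0) + M * norm (segment h j)) * delta
          <= 4 * (Kabs b (f y0) + M * (norm y0 + norm w)) * delta).
  { apply Rmult_le_compat_r; [lra|]. apply Rmult_le_compat_l; [lra|].
    apply Rplus_le_compat_l, Rmult_le_compat_l; lra. }
  assert (h * Kabs b (f y0) * norm w <= Rabs (INR k * h - INR j * h) * Kabs b (f y0) * norm w)
    by (apply Rmult_le_compat_r; [lra | apply Rmult_le_compat_r; lra]).
  assert (0 < h * Kabs b (f y0) * norm w) by (apply Rmult_lt_0_compat; [nra | lra]).
  lra.
Qed.

End Segment.

Lemma small_positive (c1 c2 r1 r2 : R) : 0 < c1 -> 0 < c2 -> 0 < r1 -> 0 < r2 ->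
  exists d, 0 < d /\ d <= 1 /\ c1 * d <= r1 /\ c2 * d <= r2.
Proof.
  intros H1 H2 H3 H4. exists (Rmin 1 (Rmin (r1 / c1) (r2 / c2))).
  pose proof (Rmin_l 1 (Rmin (r1 / c1) (r2 / c2))).
  pose proof (Rmin_r 1 (Rmin (r1 / c1) (r2 / c2))).
  pose proof (Rmin_l (r1 / c1) (r2 / c2)). pose proof (Rmin_r (r1 / c1) (r2 / c2)).
  assert (0 < r1 / c1) by (apply Rdiv_lt_0_compat; lra).
  assert (0 < r2 / c2) by (apply Rdiv_lt_0_compat; lra).
  repeat split; try lra.
  - apply Rmin_glb_lt; [lra | now apply Rmin_glb_lt].
  - apply (Rmult_le_reg_r (/ c1)); [now apply Rinv_0_lt_compat|].
    rewrite Rmult_comm, <- Rmult_assoc, Rinv_l, Rmult_1_l by lra. fold (r1 / c1). lra.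
  - apply (Rmult_le_reg_r (/ c2)); [now apply Rinv_0_lt_compat|].
    rewrite Rmult_comm, <- Rmult_assoc, Rinv_l, Rmult_1_l by lra. fold (r2 / c2). lra.
Qed.

Theorem lemma2p2 (b : bool) (X : NormedSpace b) (x : X) (T : X -> X) (f : X -> K b) :
  complete X -> dim_gt1 X -> bounded_operator T ->
  bounded_functional f -> (exists v : X, f v <> K0 b) ->
  (forall eps, eps > 0 -> exists N, forall n, (n >= N)%nat ->
      Kabs b (f (orbit T n x)) <= eps * norm (orbit T n x)) ->
  ~ supercyclic T x.
Proof.
  intros _ Hdim _ Hf [y0 Hy0] Hsmall Hsc.
  destruct (kernel_nontrivial b X f Hf Hdim) as [w [Hw0 Hw]].
  destruct (functional_bound_pos b X f Hf) as [M [HM0 HM]].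
  set (A := Kabs b (f y0)). assert (HA : 0 < A) by now apply Kabs_pos.
  set (B := norm y0 + norm w). pose proof (norm_pos w Hw0) as HW.
  assert (HB : 0 < B) by (pose proof (norm_nonneg y0); unfold B; lra).
  destruct (Hsmall (A / (4 * (B + 1)))) as [N HN]; [apply Rdiv_lt_0_compat; lra|].
  set (h := / (INR N + 1)).
  assert (Hh : 0 < h) by (apply Rinv_0_lt_compat; pose proof (pos_INR N); lra).
  destruct (small_positive M (8 * (A + M * B)) (A / 2) (h * A * norm w)
    HM0 ltac:(nra) ltac:(lra) ltac:(apply Rmult_lt_0_compat; nra))
    as [delta [Hd0 [Hd1 [Hd2 Hd3]]]].
  apply (segment_not_covered b X f Hf M (Rlt_le _ _ HM0) HM y0 w Hw N (fun n => orbit T n x) delta); auto.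
  (* Supercyclicity covers the segment; the tail estimate bounds the exponents. *)
  intros k Hk. destruct (Hsc (segment b X y0 w h k) delta Hd0) as [z [n Hzn]].
  exists n, z. split; [|exact Hzn].
  destruct (le_lt_dec N n) as [HNn|]; [exfalso|assumption].
  pose proof (tail_estimate b X f Hf M (Rlt_le _ _ HM0) HM (A / (4 * (B + 1))) delta _ _ z
    ltac:(apply Rlt_le, Rdiv_lt_0_compat; lra) Hd1 (HN n HNn) Hzn) as Htail.
  rewrite f_segment in Htail by assumption.
  pose proof (norm_segment b X y0 w h k (grid_in_unit N k Hk)) as H.
  assert (A / (4 * (B + 1)) * (B + 1) = A / 4) by (field; lra).
  assert (A / (4 * (B + 1)) * (norm (segment b X y0 w h k) + 1) <= A / 4).
  { fold B in H. apply Rle_trans with (A / (4 * (B + 1)) * (B + 1)); [|lra].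
    apply Rmult_le_compat_l; [apply Rlt_le, Rdiv_lt_0_compat|]; lra. }
  fold A in Htail. lra.
Qed.
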